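(* The topological stable rank of the topological ring $s'(\mathbb{Z}^d)$ (for any $d\ge1$), equipped with its weak-$*$ topology as the dual of $s(\mathbb{Z}^d)$, is $1$; that is, the set of invertible elements of $s'(\mathbb{Z}^d)$ is dense in $s'(\mathbb{Z}^d)$.
   Context: For $\mathbf{n}\in\mathbb{Z}^d$, $\|\mathbf{n}\|_1$ denotes the $1$-norm. $s'(\mathbb{Z}^d)$ is the set of all maps $\mathbf{a}:\mathbb{Z}^d\to\mathbb{C}$ for which there exist $M>0$ and $k\in\mathbb{N}$ with $|\mathbf{a}(\mathbf{n})|\le M(1+\|\mathbf{n}\|_1)^k$ for all $\mathbf{n}$; it is a commutative unital ring under pointwise operations. $s(\mathbb{Z}^d)$ is the space of maps $\mathbf{b}:\mathbb{Z}^d\to\mathbb{C}$ with $\sup_{\mathbf{n}}(1+\|\mathbf{n}\|_1)^k|\mathbf{b}(\mathbf{n})|<\infty$ for every $k\in\mathbb{N}$. The pairing $\langle \mathbf{a},\mathbf{b}\rangle=\sum_{\mathbf{n}\in\mathbb{Z}^d}\mathbf{a}(\mathbf{n})\mathbf{b}(\mathbf{n})$ for $\mathbf{a}\in s'(\mathbb{Z}^d)$, $\mathbf{b}\in s(\mathbb{Z}^d)$ defines the weak-$*$ topology on $s'(\mathbb{Z}^d)$: a net $(\mathbf{a}_i)$ converges to $\mathbf{a}$ iff $\langle\mathbf{a}_i,\mathbf{b}\rangle\to\langle\mathbf{a},\mathbf{b}\rangle$ for every $\mathbf{b}\in s(\mathbb{Z}^d)$. For a commutative unital topological ring $R$, $U_N(R)$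 is the set of $(a_1,\dots,a_N)\in R^N$ for which there exist $b_i\in R$ with $\sum b_ia_i=1$, and the topological stable rank of $R$ is the least integer $N\ge1$ such that $U_N(R)$ is dense in $R^N$ (product topology), or $\infty$ if there is none. *)

From Stdlib Require Import Reals ZArith List Vector.
From Coquelicot Require Import Coquelicot.
Set Implicit Arguments.

Definition Zd (d : nat) : Type := Vector.t Z d.

Definition norm1 {d : nat} (n : Zd d) : Z :=
  Vector.fold_right (fun z acc => (Z.abs z + acc)%Z) n 0%Z.

Definition in_sprime {d : nat} (a : Zd d -> C) : Prop :=
  exists (M : R) (k : nat), (0 < M)%R /\
    forall n : Zd d, (Cmod (a n) <= M * (1 + IZR (norm1 n)) ^ k)%R.

Definition in_s {d : nat} (b : Zd d -> C) : Prop :=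
  forall k : nat, exists B : R,
    forall n : Zd d, ((1 + IZR (norm1 n)) ^ k * Cmod (b n) <= B)%R.

Definition zrange (K : nat) : list Z :=
  List.map (fun j => (Z.of_nat j - Z.of_nat K)%Z) (List.seq 0 (2 * K + 1)).

Fixpoint box (K : nat) (d : nat) : list (Zd d) :=
  match d with
  | O => List.cons (Vector.nil Z) List.nil
  | S d' => List.flat_map (fun z => List.map (fun v => Vector.cons Z z d' v) (box K d'))
                          (zrange K)
  end.

Definition box_sum {d : nat} (a b : Zd d -> C) (K : nat) : C :=
  List.fold_right Cplus (RtoC 0) (List.map (fun n => Cmult (a n) (b n)) (box K d)).

(* The pairing <a,b> = sum_{n in Z^d} a(n) b(n); for a in s', b in s the series
   converges absolutely, so it equals the limit of the box partial sums. *)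
Definition pairing {d : nat} (a b : Zd d -> C) : C :=
  (real (Lim_seq (fun K => fst (box_sum a b K))),
   real (Lim_seq (fun K => snd (box_sum a b K)))).

Definition in_U {d : nat} (N : nat) (a : nat -> Zd d -> C) : Prop :=
  (forall i, (i < N)%nat -> in_sprime (a i)) /\
  exists b : nat -> Zd d -> C,
    (forall i, (i < N)%nat -> in_sprime (b i)) /\
    forall n : Zd d,
      List.fold_right Cplus (RtoC 0)
        (List.map (fun i => Cmult (b i n) (a i n)) (List.seq 0 N)) = RtoC 1.

(* Density of U_N in (s'(Z^d))^N for the product of the weak-* topologies:
   every basic neighbourhood { u | |<u_i,b> - <a_i,b>| < eps, i < N, b in bs }
   (bs a finite family in s(Z^d), eps > 0) of every a in (s')^N meets U_N. *)
Definition U_dense (d N : nat) : Prop :=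
  forall a : nat -> Zd d -> C,
    (forall i, (i < N)%nat -> in_sprime (a i)) ->
    forall (bs : list (Zd d -> C)) (eps : R),
      (forall b, List.In b bs -> in_s b) -> (0 < eps)%R ->
      exists u : nat -> Zd d -> C,
        in_U N u /\
        forall i b, (i < N)%nat -> List.In b bs ->
          (Cmod (Cminus (pairing (u i) b) (pairing (a i) b)) < eps)%R.

(* tsr(s'(Z^d)) = r, with r = Some N for a finite value N and None for infinity:
   the least N >= 1 such that U_N is dense in (s')^N. *)
Definition is_top_stable_rank (d : nat) (r : option nat) : Prop :=
  match r with
  | Some N => (1 <= N)%nat /\ U_dense d N /\
              forall M, (1 <= M)%nat -> (M < N)%nat -> ~ U_dense d M
  | None => forall N, (1 <= N)%nat -> ~ U_dense d N
  end.

(* Fix a summable weight W > 0 on Z^d decaying only polynomially,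
   W(n) = prod_j 1/((1 + |n_j|)(2 + |n_j|)).  Given a in s'(Z^d) and delta > 0,
   replace a(n) by 2 delta W(n) wherever |a(n)| < delta W(n).  The result u is
   bounded below by delta W, so 1/u has polynomial growth and u is a unit of
   s'(Z^d); and |u - a| <= 3 delta W is summable, so against any bounded b
   every partial sum of the pairing moves by at most 3 delta sup|b| sum W.  Only the boundedness
   of the test sequences b in s(Z^d) is used. *)

From Stdlib Require Import Reals ZArith List Vector Lra Lia FunctionalExtensionality.
From Coquelicot Require Import Coquelicot.
Open Scope R_scope.

(* Lim_seq is [(LimSup + LimInf) / 2] and is defined even for divergent
   sequences; the pairing is compared through it without proving convergence. *)

Lemma is_LimSup_seq_plus_const (u : nat -> R) (l : Rbar) (c : R) :
  is_LimSup_seq u l -> is_LimSup_seq (fun n => u n + c) (Rbar_plus l c).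
Proof.
  destruct l as [l| |]; simpl; intros H.
  - intros eps. destruct (H eps) as [Hfreq [N Hev]]. split.
    + intros N0. destruct (Hfreq N0) as [n [Hn Hn']]. exists n. split; [exact Hn | lra].
    + exists N. intros n Hn. specialize (Hev n Hn). lra.
  - intros M N. destruct (H (M - c) N) as [n [Hn Hn']]. exists n. split; [exact Hn | lra].
  - intros M. destruct (H (M - c)) as [N HN]. exists N. intros n Hn. specialize (HN n Hn). lra.
Qed.

Lemma LimSup_seq_plus_const (u : nat -> R) (c : R) :
  LimSup_seq (fun n => u n + c) = Rbar_plus (LimSup_seq u) c.
Proof.
  apply is_LimSup_seq_unique, is_LimSup_seq_plus_const.
  destruct (ex_LimSup_seq u) as [l Hl]. now rewrite (is_LimSup_seq_unique _ _ Hl).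
Qed.

Definition Rbar_close (e : R) (a b : Rbar) : Prop :=
  match a, b with
  | Finite x, Finite y => Rabs (y - x) <= e
  | p_infty, p_infty | m_infty, m_infty => True
  | _, _ => False
  end.

Lemma Rbar_close_opp e a b : Rbar_close e a b -> Rbar_close e (Rbar_opp a) (Rbar_opp b).
Proof.
  destruct a, b; simpl; auto. intros H.
  rewrite <- Rabs_Ropp. replace (- (- r0 - - r)) with (r0 - r) by ring. exact H.
Qed.

Section SmallPerturbation.
Variables (x y : nat -> R) (e : R).
Hypothesis y_small : forall n, Rabs (y n) <= e.

Lemma LimSup_seq_perturb :
  Rbar_close e (LimSup_seq x) (LimSup_seq (fun n => x n + y n)).
Proof.
  assert (lower : Rbar_le (LimSup_seq (fun n => x n + - e)) (LimSup_seq (fun n => x n + y n))).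
  { apply LimSup_le. exists 0%nat. intros n _.
    specialize (y_small n). apply Rabs_le_between in y_small. lra. }
  assert (upper : Rbar_le (LimSup_seq (fun n => x n + y n)) (LimSup_seq (fun n => x n + e))).
  { apply LimSup_le. exists 0%nat. intros n _.
    specialize (y_small n). apply Rabs_le_between in y_small. lra. }
  rewrite !LimSup_seq_plus_const in lower, upper.
  destruct (LimSup_seq x), (LimSup_seq (fun n => x n + y n)); simpl in *; auto.
  apply Rabs_le. lra.
Qed.

End SmallPerturbation.

Lemma LimInf_seq_perturb (x y : nat -> R) (e : R) :
  (forall n, Rabs (y n) <= e) ->
  Rbar_close e (LimInf_seq x) (LimInf_seq (fun n => x n + y n)).
Proof.
  intros y_small.
  assert (opp_LimSup : forall u, LimInf_seq u = Rbar_opp (LimSup_seq (fun n => - u n))).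
  { intros u. now rewrite LimSup_seq_opp, Rbar_opp_involutive. }
  rewrite !opp_LimSup.
  replace (fun n => - (x n + y n)) with (fun n => - x n + - y n)
    by (apply functional_extensionality; intros; ring).
  apply Rbar_close_opp, LimSup_seq_perturb. intros n. now rewrite Rabs_Ropp.
Qed.

Lemma real_Lim_seq_perturb (x y : nat -> R) (e : R) :
  (forall n, Rabs (y n) <= e) ->
  Rabs (real (Lim_seq (fun n => x n + y n)) - real (Lim_seq x)) <= e.
Proof.
  intros y_small.
  assert (e_ge0 : 0 <= e) by (eapply Rle_trans; [apply Rabs_pos | apply (y_small 0%nat)]).
  pose proof (LimSup_seq_perturb x y e y_small) as Hsup.
  pose proof (LimInf_seq_perturb x y e y_small) as Hinf.
  unfold Lim_seq.
  destruct (LimSup_seq x), (LimSup_seq (fun n => x n + y n)),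
    (LimInf_seq x), (LimInf_seq (fun n => x n + y n));
    simpl in *; try contradiction; rewrite ?Rminus_0_r, ?Rminus_diag, ?Rabs_R0; auto.
  apply Rabs_le_between in Hsup, Hinf. apply Rabs_le_between. lra.
Qed.

Lemma pairing_perturb {d : nat} (u a b : Zd d -> C) (e : R) :
  (forall K, Cmod (Cminus (box_sum u b K) (box_sum a b K)) <= e) ->
  Cmod (Cminus (pairing u b) (pairing a b)) <= sqrt 2 * e.
Proof.
  intros Hclose.
  assert (parts : forall K,
      Rabs (fst (box_sum u b K) - fst (box_sum a b K)) <= e /\
      Rabs (snd (box_sum u b K) - snd (box_sum a b K)) <= e).
  { intros K. pose proof (Rmax_Cmod (Cminus (box_sum u b K) (box_sum a b K))) as Hmax.
    specialize (Hclose K). simpl in Hmax.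
    split; (eapply Rle_trans; [| exact Hclose]); (eapply Rle_trans; [| exact Hmax]);
      [apply Rmax_l | apply Rmax_r]. }
  assert (perturb : forall p : C -> R,
      (forall K, Rabs (p (box_sum u b K) - p (box_sum a b K)) <= e) ->
      Rabs (real (Lim_seq (fun K => p (box_sum u b K)))
            - real (Lim_seq (fun K => p (box_sum a b K)))) <= e).
  { intros p Hp.
    rewrite (Lim_seq_ext (fun K => p (box_sum u b K))
               (fun K => p (box_sum a b K) + (p (box_sum u b K) - p (box_sum a b K))))
      by (intros; ring).
    now apply real_Lim_seq_perturb. }
  eapply Rle_trans; [apply Cmod_2Rmax|]. apply Rmult_le_compat_l; [apply sqrt_pos|].
  apply Rmax_lub; simpl; apply perturb; intros K; apply parts.
Qed.

Definition rsum {A} (f : A -> R) (l : list A) : R := List.fold_right Rplus 0 (List.map f l).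

Lemma rsum_le {A} (f h : A -> R) l : (forall x, f x <= h x) -> rsum f l <= rsum h l.
Proof. intros H; induction l; unfold rsum in *; simpl; [lra|]. specialize (H a). lra. Qed.

Lemma rsum_app {A} (f : A -> R) l1 l2 : rsum f (l1 ++ l2) = rsum f l1 + rsum f l2.
Proof. induction l1; unfold rsum in *; simpl; [ring|]. rewrite IHl1. ring. Qed.

Lemma rsum_scal {A} (f : A -> R) c l : rsum (fun x => c * f x) l = c * rsum f l.
Proof. induction l; unfold rsum in *; simpl; [ring|]. rewrite IHl. ring. Qed.

Lemma rsum_map {A B} (f : B -> R) (h : A -> B) l :
  rsum f (List.map h l) = rsum (fun x => f (h x)) l.
Proof. unfold rsum. now rewrite List.map_map. Qed.

Lemma rsum_flat_map {A B} (f : B -> R) (h : A -> list B) l :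
  rsum f (List.flat_map h l) = rsum (fun z => rsum f (h z)) l.
Proof. induction l; simpl; [reflexivity|]. now rewrite rsum_app, IHl. Qed.

Lemma rsum_telescope (psi : nat -> R) m n :
  rsum (fun j => psi (S j) - psi j) (List.seq m n) = psi (m + n)%nat - psi m.
Proof.
  revert m; induction n; intros m; unfold rsum in *; simpl.
  - rewrite Nat.add_0_r. ring.
  - rewrite IHn. replace (S m + n)%nat with (m + S n)%nat by lia. ring.
Qed.

Lemma Cmod_fold_Cplus_le {A} (f : A -> C) l :
  Cmod (List.fold_right Cplus (RtoC 0) (List.map f l)) <= rsum (fun x => Cmod (f x)) l.
Proof.
  induction l; unfold rsum in *; simpl.
  - rewrite Cmod_0. lra.
  - eapply Rle_trans; [apply Cmod_triangle|]. lra.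
Qed.

Lemma fold_Cplus_minus {A} (f h : A -> C) l :
  Cminus (List.fold_right Cplus (RtoC 0) (List.map f l))
         (List.fold_right Cplus (RtoC 0) (List.map h l))
  = List.fold_right Cplus (RtoC 0) (List.map (fun x => Cminus (f x) (h x)) l).
Proof. induction l; simpl; [ring|]. rewrite <- IHl. ring. Qed.

Definition weight1 (r : R) : R := / ((1 + Rabs r) * (2 + Rabs r)).

(* Primitive of [weight1] on the integers: its increments dominate [weight1]
   and it is bounded by 1, so [weight1] sums to at most 2 over any interval. *)
Definition weight1_primitive (r : R) : R := r / (1 + Rabs r).

Lemma weight1_pos r : 0 < weight1 r.
Proof. unfold weight1. pose proof (Rabs_pos r). apply Rinv_0_lt_compat. nra. Qed.

Lemma weight1_le_half r : weight1 r <= 1 / 2.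
Proof.
  unfold weight1. pose proof (Rabs_pos r).
  rewrite Rdiv_1_l. apply Rinv_le_contravar; nra.
Qed.

Lemma weight1_inv_le r : 1 <= 2 * (1 + Rabs r) ^ 2 * weight1 r.
Proof.
  unfold weight1. pose proof (Rabs_pos r).
  apply Rmult_le_reg_r with ((1 + Rabs r) * (2 + Rabs r)); [nra|].
  rewrite Rmult_assoc, Rinv_l by nra. nra.
Qed.

Lemma weight1_le_increment (z : Z) :
  weight1 (IZR z) <= weight1_primitive (IZR (z + 1)) - weight1_primitive (IZR z).
Proof.
  unfold weight1, weight1_primitive. rewrite plus_IZR.
  destruct (Z_le_gt_dec 0 z) as [Hz|Hz].
  - apply IZR_le in Hz. rewrite !Rabs_pos_eq by lra. apply Req_le. field. lra.
  - assert (Hz' : IZR z <= -1) by (apply IZR_le; lia).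
    rewrite Rabs_left by lra.
    destruct (Req_dec (IZR z) (-1)) as [E|E].
    + rewrite E. replace (-1 + 1) with 0 by ring. rewrite Rabs_R0.
      replace (/ ((1 + - -1) * (2 + - -1))) with (/ 6) by field.
      replace (0 / (1 + 0) - -1 / (1 + - -1)) with (/ 2) by field. lra.
    + rewrite Rabs_left by lra. set (t := IZR z) in *.
      apply Rle_trans with (/ ((- t) * (1 - t))).
      * apply Rinv_le_contravar; nra.
      * apply Req_le. field. lra.
Qed.

Lemma Rabs_weight1_primitive_le r : Rabs (weight1_primitive r) <= 1.
Proof.
  unfold weight1_primitive. pose proof (Rabs_pos r).
  rewrite Rabs_div, (Rabs_pos_eq (1 + Rabs r)) by lra.
  apply Rmult_le_reg_r with (1 + Rabs r); [lra|].
  unfold Rdiv. rewrite Rmult_assoc, Rinv_l by lra. lra.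
Qed.

Lemma rsum_weight1_zrange K : rsum (fun z => weight1 (IZR z)) (zrange K) <= 2.
Proof.
  unfold zrange. rewrite rsum_map.
  set (psi := fun j : nat => weight1_primitive (IZR (Z.of_nat j - Z.of_nat K))).
  apply Rle_trans with (rsum (fun j => psi (S j) - psi j) (List.seq 0 (2 * K + 1))).
  - apply rsum_le. intros j. unfold psi. rewrite Nat2Z.inj_succ.
    replace (Z.succ (Z.of_nat j) - Z.of_nat K)%Z with ((Z.of_nat j - Z.of_nat K) + 1)%Z by lia.
    apply weight1_le_increment.
  - rewrite rsum_telescope. unfold psi.
    pose proof (Rabs_weight1_primitive_le (IZR (Z.of_nat (0 + (2 * K + 1)) - Z.of_nat K))) as H1.
    pose proof (Rabs_weight1_primitive_le (IZR (Z.of_nat 0 - Z.of_nat K))) as H0.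
    apply Rabs_le_between in H0, H1. lra.
Qed.

Definition weight {d : nat} (n : Zd d) : R :=
  Vector.fold_right (fun z acc => weight1 (IZR z) * acc) n 1.

Lemma weight_cons {d} z (v : Zd d) : weight (Vector.cons Z z d v) = weight1 (IZR z) * weight v.
Proof. reflexivity. Qed.

Lemma norm1_cons {d} z (v : Zd d) : norm1 (Vector.cons Z z d v) = (Z.abs z + norm1 v)%Z.
Proof. reflexivity. Qed.

Lemma weight_pos {d} (n : Zd d) : 0 < weight n.
Proof.
  induction n as [|h d0 n IHn]; [cbv; lra|].
  rewrite weight_cons. pose proof (weight1_pos (IZR h)). nra.
Qed.

Lemma weight_le1 {d} (n : Zd d) : weight n <= 1.
Proof.
  induction n as [|h d0 n IHn]; [cbv; lra|]. rewrite weight_cons.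
  pose proof (weight1_pos (IZR h)). pose proof (weight1_le_half (IZR h)).
  pose proof (weight_pos n). nra.
Qed.

Lemma norm1_ge0 {d} (n : Zd d) : 0 <= IZR (norm1 n).
Proof.
  induction n as [|h d0 n IHn]; [cbv; lra|].
  rewrite norm1_cons, plus_IZR, abs_IZR. pose proof (Rabs_pos (IZR h)). lra.
Qed.

Lemma weight_inv_le {d} (n : Zd d) : 1 <= 2 ^ d * (1 + IZR (norm1 n)) ^ (2 * d) * weight n.
Proof.
  induction n as [|h d' v IH]; [cbv; lra|].
  rewrite weight_cons, norm1_cons, plus_IZR, abs_IZR.
  set (a := Rabs (IZR h)) in *. set (N := IZR (norm1 v)) in *.
  assert (a_ge0 : 0 <= a) by apply Rabs_pos.
  assert (N_ge0 : 0 <= N) by apply norm1_ge0.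
  assert (head : 1 <= 2 * (1 + (a + N)) ^ 2 * weight1 (IZR h)).
  { eapply Rle_trans; [apply (weight1_inv_le (IZR h))|]. fold a.
    apply Rmult_le_compat_r; [left; apply weight1_pos|].
    apply Rmult_le_compat_l; [lra|]. apply pow_incr. lra. }
  assert (tail : 1 <= 2 ^ d' * (1 + (a + N)) ^ (2 * d') * weight v).
  { eapply Rle_trans; [exact IH|]. apply Rmult_le_compat_r; [left; apply weight_pos|].
    apply Rmult_le_compat_l; [apply pow_le; lra|]. apply pow_incr. lra. }
  replace (2 * S d')%nat with (2 + 2 * d')%nat by lia.
  rewrite pow_add. simpl (2 ^ S d').
  replace (2 * 2 ^ d' * ((1 + (a + N)) ^ 2 * (1 + (a + N)) ^ (2 * d'))
             * (weight1 (IZR h) * weight v))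
    with ((2 * (1 + (a + N)) ^ 2 * weight1 (IZR h))
            * (2 ^ d' * (1 + (a + N)) ^ (2 * d') * weight v)) by ring.
  nra.
Qed.

Lemma rsum_weight_box K d : rsum weight (box K d) <= 2 ^ d.
Proof.
  induction d as [|d IHd]; simpl.
  - cbv; lra.
  - rewrite rsum_flat_map.
    apply Rle_trans with (rsum (fun z => 2 ^ d * weight1 (IZR z)) (zrange K)).
    + apply rsum_le. intros z. rewrite rsum_map.
      change (rsum (fun v => weight1 (IZR z) * weight v) (box K d) <= 2 ^ d * weight1 (IZR z)).
      rewrite rsum_scal, Rmult_comm.
      apply Rmult_le_compat_r; [left; apply weight1_pos | exact IHd].
    + rewrite rsum_scal, Rmult_comm. apply Rmult_le_compat_r; [apply pow_le; lra|].
      apply rsum_weight1_zrange.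
Qed.

Lemma in_s_list_bounded {d} (bs : list (Zd d -> C)) :
  (forall b, List.In b bs -> in_s b) ->
  exists B, 0 < B /\ forall b, List.In b bs -> forall n, Cmod (b n) <= B.
Proof.
  induction bs as [|b0 bs IH]; intros Hs.
  - exists 1. split; [lra | intros b []].
  - destruct IH as [B [B_pos HB]]; [intros b Hb; apply Hs; now right|].
    destruct (Hs b0 (or_introl eq_refl) 0%nat) as [B0 HB0].
    exists (Rmax B B0). split; [eapply Rlt_le_trans; [exact B_pos | apply Rmax_l]|].
    intros b [<-|Hb] n.
    + eapply Rle_trans; [| apply Rmax_r]. specialize (HB0 n). simpl in HB0. lra.
    + eapply Rle_trans; [apply HB; exact Hb | apply Rmax_l].
Qed.

Section LiftAwayFromZero.
Variables (d : nat) (del : R).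
Hypothesis del_pos : 0 < del.

Definition lift (f : Zd d -> C) (n : Zd d) : C :=
  if Rlt_dec (Cmod (f n)) (del * weight n) then RtoC (2 * del * weight n) else f n.

Lemma Cmod_lift_sub_le f n : Cmod (Cminus (lift f n) (f n)) <= 3 * del * weight n.
Proof.
  unfold lift. pose proof (weight_pos n). destruct (Rlt_dec _ _).
  - unfold Cminus. eapply Rle_trans; [apply Cmod_triangle|].
    rewrite Cmod_R, Cmod_opp, Rabs_pos_eq by nra. lra.
  - unfold Cminus. rewrite Cplus_opp_r, Cmod_0. nra.
Qed.

Lemma Cmod_lift_ge f n : del * weight n <= Cmod (lift f n).
Proof.
  unfold lift. pose proof (weight_pos n). destruct (Rlt_dec _ _).
  - rewrite Cmod_R, Rabs_pos_eq by nra. nra.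
  - lra.
Qed.

Lemma lift_neq0 f n : lift f n <> RtoC 0.
Proof.
  pose proof (weight_pos n). pose proof (Cmod_lift_ge f n) as Hge.
  intros E. rewrite E, Cmod_0 in Hge. nra.
Qed.

Lemma lift_in_sprime f : in_sprime f -> in_sprime (lift f).
Proof.
  intros [M [k [M_pos Hf]]]. exists (M + 2 * del), k. split; [lra|].
  intros n. pose proof (weight_pos n). pose proof (weight_le1 n).
  assert (Hp : 1 <= (1 + IZR (norm1 n)) ^ k) by (apply pow_R1_Rle; pose proof (norm1_ge0 n); lra).
  specialize (Hf n). unfold lift. destruct (Rlt_dec _ _).
  - rewrite Cmod_R, Rabs_pos_eq by nra. nra.
  - nra.
Qed.

Lemma lift_inv_in_sprime f : in_sprime (fun n => Cinv (lift f n)).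
Proof.
  exists (2 ^ d / del), (2 * d)%nat. split; [apply Rdiv_lt_0_compat; [apply pow_lt|]; lra|].
  intros n. pose proof (weight_pos n). pose proof (weight_inv_le n) as Hinv.
  rewrite Cmod_inv by apply lift_neq0.
  apply Rle_trans with (/ (del * weight n)).
  - apply Rinv_le_contravar; [nra | apply Cmod_lift_ge].
  - apply Rmult_le_reg_l with (del * weight n); [nra|].
    rewrite Rinv_r by nra.
    replace (del * weight n * (2 ^ d / del * (1 + IZR (norm1 n)) ^ (2 * d)))
      with (2 ^ d * (1 + IZR (norm1 n)) ^ (2 * d) * weight n) by (field; lra).
    exact Hinv.
Qed.

Lemma box_sum_lift_close f b B K :
  (forall n, Cmod (b n) <= B) ->
  Cmod (Cminus (box_sum (lift f) b K) (box_sum f b K)) <= 3 * del * B * 2 ^ d.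
Proof.
  intros HB. unfold box_sum. rewrite fold_Cplus_minus.
  eapply Rle_trans; [apply Cmod_fold_Cplus_le|].
  assert (B_ge0 : 0 <= B) by (eapply Rle_trans; [apply Cmod_ge_0 | apply (HB (Vector.const 0%Z d))]).
  apply Rle_trans with (rsum (fun n => 3 * del * B * weight n) (box K d)).
  - apply rsum_le. intros n.
    replace (Cminus (Cmult (lift f n) (b n)) (Cmult (f n) (b n)))
      with (Cmult (Cminus (lift f n) (f n)) (b n)) by ring.
    rewrite Cmod_mult. pose proof (Cmod_lift_sub_le f n). pose proof (HB n).
    pose proof (Cmod_ge_0 (b n)). pose proof (Cmod_ge_0 (Cminus (lift f n) (f n))).
    pose proof (weight_pos n). nra.
  - rewrite rsum_scal. apply Rmult_le_compat_l; [nra | apply rsum_weight_box].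
Qed.

End LiftAwayFromZero.

Lemma lift_in_U d del (a : nat -> Zd d -> C) :
  0 < del -> in_sprime (a 0%nat) -> in_U 1 (fun i => lift d del (a i)).
Proof.
  intros del_pos Ha. split.
  - intros i Hi. replace i with 0%nat by lia. now apply lift_in_sprime.
  - exists (fun i n => Cinv (lift d del (a i) n)). split.
    + intros i _. now apply lift_inv_in_sprime.
    + intros n. simpl. rewrite Cinv_l by now apply lift_neq0. ring.
Qed.

Lemma U_dense_1 d : U_dense d 1.
Proof.
  intros a Ha bs eps Hbs eps_pos.
  destruct (in_s_list_bounded bs Hbs) as [B [B_pos HB]].
  assert (pow2_pos : 0 < 2 ^ d) by (apply pow_lt; lra).
  set (del := eps / (6 * B * 2 ^ d)).
  assert (del_pos : 0 < del) by (apply Rdiv_lt_0_compat; nra).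
  exists (fun i => lift d del (a i)). split; [apply lift_in_U; auto; apply Ha; lia|].
  intros i b _ Hb.
  eapply Rle_lt_trans.
  { apply pairing_perturb. intros K. apply box_sum_lift_close; [exact del_pos | now apply HB]. }
  assert (sqrt2_lt2 : sqrt 2 < 2).
  { rewrite <- (sqrt_square 2) at 2 by lra. apply sqrt_lt_1; lra. }
  replace (3 * del * B * 2 ^ d) with (eps / 2) by (unfold del; field; lra).
  nra.
Qed.

Theorem theorem1p8 : forall d : nat, (1 <= d)%nat -> is_top_stable_rank d (Some 1%nat).
Proof.
  intros d _. split; [lia|]. split.
  - exact (U_dense_1 d).
  - intros M HM1 HM. lia.
Qed.
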